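(* Let $P$ be a disjunctive finitely recursive program and $P_1,P_2,\dots$ a module sequence for $P$. A ground formula $F$ in the language of $P$ is a skeptical consequence of $P$ if and only if there exists a finite $k\ge1$ such that $F$ is a skeptical consequence of $P_k$ and $\mathit{atom}(F)\subseteq\mathit{atom}(P_k)$.
   Context: A disjunctive program is a set of rules $A_1\vee\dots\vee A_m\leftarrow L_1,\dots,L_n$ ($m>0$, $n\ge0$), $A_j$ atoms, $L_i$ atoms or negated atoms $\mathtt{not}\,A$, possibly with function symbols; $head(r)=\{A_1,\dots,A_m\}$. $\mathsf{Ground}(P)$ is its ground instantiation; for a set $X$ of ground rules, $\mathit{atom}(X)$ is the set of ground atoms occurring in $X$. For a set $Q$ of ground rules and a set $M$ of ground atoms, $Q^M$ is obtained by deleting rules of $Q$ having some $\mathtt{not}\,B$ in the body with $B\in M$ and deleting negative literals from the remaining rules; $M$ is a stable model of $Q$ iff it is a minimal Herbrand model of $Q^M$ (stable models of $P$ are those of $\mathsf{Ground}(P)$). A ground formula is a closed propositional combination of ground atoms; $\mathit{atom}(F)$ is the set of ground atoms occurring in $F$. $F$ is a skeptical consequence of a program iff $F$ is (classically) true in every stable model of it (vacuously if there is none). The dependency graph has ground atoms as vertices and an edge $A\to B$ whenever some $r\in\mathsf{Ground}(P)$ has $A\in head(r)$ and $B$ occurring in $r$ (body or head); $A$ depends on $B$ if there is a directed path from $A$ to $B$ (every atom depends on itself). $P$ is finitely recursive iff each ground atom depends on finitely many ground atoms. With $GH$ the set of ground head atoms of $\mathsf{Ground}(P)$ and an enumeration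 $p_1,p_2,\dots$ of $GH$, the induced module sequence is $P_1=\{r\in\mathsf{Ground}(P)\mid p_1$ depends on some atom of $head(r)\}$, $P_{i+1}=P_i\cup\{r\in\mathsf{Ground}(P)\mid p_{i+1}$ depends on some atom of $head(r)\}$. *)

From Stdlib Require Import List Relations Arith.
Import ListNotations.

(* First-order terms: variables and function symbols (a constant is a
   function symbol applied to the empty list).  A symbol is identified by
   its name together with its arity (= number of arguments). *)
Inductive term : Type :=
| Var : nat -> term
| Fn  : nat -> list term -> term.

Record atom : Type := mkAtom { pred : nat ; args : list term }.

Inductive lit : Type :=
| Pos : atom -> lit
| Neg : atom -> lit.

Definition lit_atom (l : lit) : atom :=
  match l with Pos a => a | Neg a => a end.

(* A1 v ... v Am <- L1, ..., Ln *)
Record rule : Type := mkRule { head : list atom ; body : list lit }.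

Definition program := list rule.

Definition disjunctive_program (P : program) : Prop :=
  forall r, In r P -> head r <> [].

Definition rset := rule -> Prop.
Definition aset := atom -> Prop.

Definition atom_in_rule (A : atom) (r : rule) : Prop :=
  In A (head r) \/ exists l, In l (body r) /\ lit_atom l = A.

Definition atoms_of (X : rset) : aset :=
  fun A => exists r, X r /\ atom_in_rule A r.

Inductive subterm : term -> term -> Prop :=
| st_refl : forall t, subterm t t
| st_arg  : forall t u f ts, In u ts -> subterm t u -> subterm t (Fn f ts).

Definition fsym_occurs (P : program) (f n : nat) : Prop :=
  exists r A u ts, In r P /\ atom_in_rule A r /\ In u (args A) /\
    subterm (Fn f ts) u /\ length ts = n.

(* The signature used to build the Herbrand universe of P: the function
   symbols of P, plus one constant (symbol 0 of arity 0) if P has none. *)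
Definition herbrand_sig (P : program) (f n : nat) : Prop :=
  fsym_occurs P f n \/ (f = 0 /\ n = 0 /\ ~ exists c, fsym_occurs P c 0).

Inductive ground_over (S : nat -> nat -> Prop) : term -> Prop :=
| go_fn : forall f ts, S f (length ts) ->
    (forall t, In t ts -> ground_over S t) -> ground_over S (Fn f ts).

Definition herbrand_universe (P : program) : term -> Prop :=
  ground_over (herbrand_sig P).

Fixpoint subst_term (s : nat -> term) (t : term) : term :=
  match t with
  | Var v => s v
  | Fn f ts => Fn f (map (subst_term s) ts)
  end.

Definition subst_atom (s : nat -> term) (A : atom) : atom :=
  mkAtom (pred A) (map (subst_term s) (args A)).

Definition subst_lit (s : nat -> term) (l : lit) : lit :=
  match l with Pos a => Pos (subst_atom s a) | Neg a => Neg (subst_atom s a) end.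

Definition subst_rule (s : nat -> term) (r : rule) : rule :=
  mkRule (map (subst_atom s) (head r)) (map (subst_lit s) (body r)).

Definition Ground (P : program) : rset :=
  fun g => exists r s, In r P /\ (forall v, herbrand_universe P (s v)) /\
                       g = subst_rule s r.

Definition reduct (Q : rset) (M : aset) : rset :=
  fun r' => exists r, Q r /\ (forall B, In (Neg B) (body r) -> ~ M B) /\
    r' = mkRule (head r) (filter (fun l => match l with Pos _ => true | Neg _ => false end) (body r)).

Definition lit_true (M : aset) (l : lit) : Prop :=
  match l with Pos a => M a | Neg a => ~ M a end.

Definition is_model (Q : rset) (M : aset) : Prop :=
  forall r, Q r -> (forall l, In l (body r) -> lit_true M l) ->
            exists A, In A (head r) /\ M A.

Definition subset (M N : aset) : Prop := forall A, M A -> N A.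

Definition minimal_model (Q : rset) (M : aset) : Prop :=
  is_model Q M /\ forall N, is_model Q N -> subset N M -> subset M N.

Definition stable_model (Q : rset) (M : aset) : Prop :=
  minimal_model (reduct Q M) M.

Inductive formula : Type :=
| FAtom : atom -> formula
| FTrue : formula
| FFalse : formula
| FNot : formula -> formula
| FAnd : formula -> formula -> formula
| FOr  : formula -> formula -> formula
| FImp : formula -> formula -> formula.

Fixpoint holds (M : aset) (F : formula) : Prop :=
  match F with
  | FAtom a => M a
  | FTrue => True
  | FFalse => False
  | FNot G => ~ holds M G
  | FAnd G H => holds M G /\ holds M H
  | FOr G H => holds M G \/ holds M H
  | FImp G H => holds M G -> holds M H
  end.

Fixpoint fatoms (F : formula) : list atom :=
  match F with
  | FAtom a => [a]
  | FTrue | FFalse => []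
  | FNot G => fatoms G
  | FAnd G H | FOr G H | FImp G H => fatoms G ++ fatoms H
  end.

Definition skeptical (Q : rset) (F : formula) : Prop :=
  forall M, stable_model Q M -> holds M F.

Definition dep_edge (P : program) (A B : atom) : Prop :=
  exists r, Ground P r /\ In A (head r) /\ atom_in_rule B r.

Definition depends (P : program) : atom -> atom -> Prop :=
  clos_refl_trans atom (dep_edge P).

Definition finitely_recursive (P : program) : Prop :=
  forall A, exists l : list atom, forall B, depends P A B -> In B l.

Definition ground_heads (P : program) : aset :=
  fun A => exists r, Ground P r /\ In A (head r).

(* p_1, p_2, ... is an enumeration of GH (indices start at 1) *)
Definition enumerates (GH : aset) (p : nat -> atom) : Prop :=
  (forall i, 1 <= i -> GH (p i)) /\ (forall A, GH A -> exists i, 1 <= i /\ p i = A).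

Definition module (P : program) (p : nat -> atom) (k : nat) : rset :=
  fun r => Ground P r /\ exists i, 1 <= i <= k /\
             exists A, In A (head r) /\ depends P (p i) A.

(* The module P_k is the bottom of Ground(P) relative to the splitting set D_k of all atoms on
   which p_1, ..., p_k depend.  Intersecting a stable model of Ground(P) with D_k gives a stable
   model of P_k, which yields the "if" direction.  Conversely, suppose every P_k (with k large
   enough to contain the atoms of F) has a stable model falsifying F.  Each D_k is finite because
   P is finitely recursive, so a Koenig-style argument extracts countermodels M_k of P_k with
   M_{k+1} ∩ D_k = M_k; their union is a stable model of Ground(P) falsifying F. *)
From Stdlib Require Import List Arith Lia Relations Classical
  FunctionalExtensionality PropExtensionality IndefiniteDescription.
Import ListNotations.

Lemma aset_ext (X Y : aset) : (forall A, X A <-> Y A) -> X = Y.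
Proof.
  intro H; apply functional_extensionality; intro A; apply propositional_extensionality; auto.
Qed.

Lemma rset_ext (X Y : rset) : (forall r, X r <-> Y r) -> X = Y.
Proof.
  intro H; apply functional_extensionality; intro r; apply propositional_extensionality; auto.
Qed.

Definition inter (M U : aset) : aset := fun A => M A /\ U A.

Lemma holds_agree (F : formula) :
  forall M N, (forall A, In A (fatoms F) -> (M A <-> N A)) -> (holds M F <-> holds N F).
Proof.
  induction F as [A| | |G IHG|G IHG H IHH|G IHG H IHH|G IHG H IHH]; intros M N Hagree;
    simpl in *; try tauto.
  - apply Hagree; auto.
  - rewrite (IHG M N); tauto.
  - rewrite (IHG M N), (IHH M N); try tauto; intros; apply Hagree, in_or_app; auto.
  - rewrite (IHG M N), (IHH M N); try tauto; intros; apply Hagree, in_or_app; auto.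
  - rewrite (IHG M N), (IHH M N); try tauto; intros; apply Hagree, in_or_app; auto.
Qed.

Definition positive_lit (l : lit) : bool := match l with Pos _ => true | Neg _ => false end.

Lemma is_model_reduct Q M N : is_model (reduct Q M) N <->
  forall r, Q r -> (forall B, In (Neg B) (body r) -> ~ M B) ->
    (forall A, In (Pos A) (body r) -> N A) -> exists A, In A (head r) /\ N A.
Proof.
  split.
  - intros H r Hr Hneg Hpos. apply (H (mkRule (head r) (filter positive_lit (body r)))).
    + exists r; auto.
    + simpl. intros l Hl. apply filter_In in Hl as [Hl Hp].
      destruct l; [apply Hpos; exact Hl| discriminate].
  - intros H r' [r [Hr [Hneg ->]]] Hbody. apply (H r Hr Hneg).
    intros A HA. apply (Hbody (Pos A)), filter_In. auto.
Qed.

Definition splits (Q : rset) (U : aset) : Prop :=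
  forall r A B, Q r -> In A (head r) -> U A -> atom_in_rule B r -> U B.

Definition bot (Q : rset) (U : aset) : rset :=
  fun r => Q r /\ exists A, In A (head r) /\ U A.

Section Splitting.
Variables (Q : rset) (U : aset).
Hypothesis U_splits : splits Q U.

Lemma bot_atoms r B : bot Q U r -> atom_in_rule B r -> U B.
Proof. intros [Hr [A [HA HU]]]. exact (U_splits r A B Hr HA HU). Qed.

Lemma atoms_of_bot A : atoms_of (bot Q U) A -> U A.
Proof. intros [r [Hr HA]]. exact (bot_atoms r A Hr HA). Qed.

Lemma stable_bot_sub M : stable_model (bot Q U) M -> subset M U.
Proof.
  intros [Hmod Hmin].
  assert (HMU : subset M (inter M U)).
  { apply Hmin; [| intros A [HA _]; exact HA].
    apply is_model_reduct. rewrite is_model_reduct in Hmod.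
    intros r Hr Hneg Hpos. destruct (Hmod r Hr Hneg) as [A [HA HMA]].
    - intros B HB. apply Hpos; auto.
    - exists A; repeat split; auto. apply (bot_atoms r); auto. left; auto. }
  intros A HA. apply HMU; auto.
Qed.

(* The minimality part extends a model N of the bottom by the atoms of M outside U. *)
Lemma stable_restrict M : stable_model Q M -> stable_model (bot Q U) (inter M U).
Proof.
  intros [Hmod Hmin]. rewrite is_model_reduct in Hmod. split.
  - apply is_model_reduct. intros r Hr Hneg Hpos.
    destruct (Hmod r (proj1 Hr)) as [A [HA HMA]].
    + intros B HB HMB. apply (Hneg B HB). split; auto.
      apply (bot_atoms r); auto. right. exists (Neg B); auto.
    + intros A HA; apply Hpos; auto.
    + exists A; repeat split; auto. apply (bot_atoms r); auto. left; auto.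
  - intros N HN HNsub. rewrite is_model_reduct in HN.
    set (N' := fun A => N A \/ (M A /\ ~ U A)).
    assert (HN' : is_model (reduct Q M) N').
    { apply is_model_reduct. intros r Hr Hneg Hpos.
      destruct (classic (exists A, In A (head r) /\ U A)) as [Hhead | Hhead].
      - assert (Hbot : bot Q U r) by (split; auto).
        destruct (HN r Hbot) as [A [HA HNA]].
        + intros B HB [HMB _]. exact (Hneg B HB HMB).
        + intros A HA. destruct (Hpos A HA) as [HNA | [_ HnU]]; auto.
          exfalso; apply HnU, (bot_atoms r); auto. right. exists (Pos A); auto.
        + exists A; split; [auto | left; auto].
      - destruct (Hmod r Hr Hneg) as [A [HA HMA]].
        + intros B HB. destruct (Hpos B HB) as [HNB | [HMB _]]; auto. apply HNsub; auto.
        + exists A; split; auto. right; split; auto. intro HU; apply Hhead; eauto. }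
    assert (HMN' : subset M N').
    { apply Hmin; auto. intros A [HNA | [HMA _]]; [apply HNsub|]; auto. }
    intros A [HMA HUA]. destruct (HMN' A HMA) as [HNA | [_ HnU]]; [auto | contradiction].
Qed.

Lemma skeptical_of_bot F :
  skeptical (bot Q U) F -> (forall A, In A (fatoms F) -> atoms_of (bot Q U) A) -> skeptical Q F.
Proof.
  intros Hsk HF M HM. apply (holds_agree F (inter M U)); [| exact (Hsk _ (stable_restrict M HM))].
  intros A HA. pose proof (atoms_of_bot A (HF A HA)). unfold inter; tauto.
Qed.

End Splitting.

Lemma bot_bot Q U V : subset U V -> bot (bot Q V) U = bot Q U.
Proof.
  intro HUV. apply rset_ext; intro r; unfold bot; split.
  - intros [[Hr _] HU]; auto.
  - intros [Hr [A [HA HU]]]. split; [split; auto |]; exists A; auto.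
Qed.

Lemma splits_bot Q U V : splits Q U -> splits (bot Q V) U.
Proof. intros HS r A B [Hr _]; apply HS; auto. Qed.

Section Limit.
Variables (Q : rset) (U Ms : nat -> aset).
Hypotheses
  (U_splits : forall n, splits Q (U n))
  (U_mono : forall n m, n <= m -> subset (U n) (U m))
  (U_cover : forall r, Q r -> exists n, bot Q (U n) r)
  (Ms_stable : forall n, stable_model (bot Q (U n)) (Ms n))
  (Ms_compat : forall n, inter (Ms (S n)) (U n) = Ms n).

Lemma Ms_restrict n m A : n <= m -> (Ms n A <-> Ms m A /\ U n A).
Proof.
  induction 1 as [|m Hnm IH].
  - split; [| tauto]. intro HA; split; auto.
    exact (stable_bot_sub _ _ (U_splits n) _ (Ms_stable n) A HA).
  - rewrite IH, <- (Ms_compat m). unfold inter. split; [tauto |].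
    intros [HA HUn]; repeat split; auto. exact (U_mono n m Hnm A HUn).
Qed.

Definition Mlim : aset := fun A => exists n, Ms n A.

Lemma Mlim_restrict n A : U n A -> (Mlim A <-> Ms n A).
Proof.
  intros HU; split; [intros [m Hm] | intro HA; exists n; auto].
  destruct (Nat.le_ge_cases m n) as [Hmn | Hnm].
  - apply (Ms_restrict m n A Hmn) in Hm. apply Hm.
  - apply (Ms_restrict n m A Hnm). auto.
Qed.

Lemma Mlim_stable : stable_model Q Mlim.
Proof.
  split.
  - apply is_model_reduct. intros r Hr Hneg Hpos.
    destruct (U_cover r Hr) as [n Hbot].
    destruct (Ms_stable n) as [Hmod _]. rewrite is_model_reduct in Hmod.
    destruct (Hmod r Hbot) as [A [HA HMA]].
    + intros B HB HMB. apply (Hneg B HB). exists n; auto.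
    + intros A HA. apply (Mlim_restrict n A); auto.
      apply (bot_atoms Q (U n) (U_splits n) r); auto. right; exists (Pos A); auto.
    + exists A; split; auto. exists n; auto.
  - intros N HN HNsub A [n HA]. rewrite is_model_reduct in HN.
    destruct (Ms_stable n) as [_ Hmin].
    assert (HMsN : subset (Ms n) (inter N (U n))).
    { apply Hmin.
      - apply is_model_reduct. intros r Hbot Hneg Hpos.
        destruct (HN r (proj1 Hbot)) as [B [HB HNB]].
        + intros B HB HMB. apply (Hneg B HB), (Mlim_restrict n B); auto.
          apply (bot_atoms Q (U n) (U_splits n) r); auto. right; exists (Neg B); auto.
        + intros B HB. apply Hpos; auto.
        + exists B; repeat split; auto.
          apply (bot_atoms Q (U n) (U_splits n) r); auto. left; auto.
      - intros B [HNB HUB]. apply (Mlim_restrict n B HUB); auto. }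
    apply HMsN; auto.
Qed.

End Limit.

Lemma infinitely_often_subset (L : list atom) : forall (R : nat -> aset -> Prop),
  (forall j, exists j', j <= j' /\ exists X, (forall A, X A -> In A L) /\ R j' X) ->
  exists X, (forall A, X A -> In A L) /\ forall j, exists j', j <= j' /\ R j' X.
Proof.
  induction L as [|a L IH]; intros R H.
  - exists (fun _ => False). split; [intros _ [] |].
    intros j. destruct (H j) as [j' [Hj [X [HX HR]]]]. exists j'; split; auto.
    replace (fun _ : atom => False) with X; auto.
    apply aset_ext; intro A; split; [exact (HX A) | intros []].
  - destruct (classic (forall j, exists j', j <= j' /\ exists X,
        (forall A, X A -> In A (a :: L)) /\ X a /\ R j' X)) as [Hwith | Hwithout].
    + destruct (IH (fun j X' => R j (fun A => A = a \/ X' A))) as [X' [HX' HR]].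
      * intro j. destruct (Hwith j) as [j' [Hj [X [HX [Ha HR]]]]]. exists j'; split; auto.
        exists (fun A => X A /\ A <> a). split.
        -- intros A [HXA Hne]. destruct (HX A HXA); [congruence | auto].
        -- replace (fun A => A = a \/ X A /\ A <> a) with X; auto.
           apply aset_ext; intro A. split.
           ++ intro HXA. destruct (classic (A = a)); auto.
           ++ intros [-> | [HXA _]]; auto.
      * exists (fun A => A = a \/ X' A). split; auto.
        intros A [-> | HA]; simpl; auto.
    + apply not_all_ex_not in Hwithout as [j0 Hj0].
      destruct (IH R) as [X [HX HR]].
      * intro j. destruct (H (Nat.max j j0)) as [j' [Hj [X [HX HR]]]].
        exists j'; split; [lia |]. exists X; split; auto.
        intros A HA. destruct (HX A HA) as [<- | HAL]; auto.
        exfalso; apply Hj0. exists j'; split; [lia |]. exists X; auto.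
      * exists X; split; auto. intros A HA; simpl; auto.
Qed.

Lemma dependent_choice {T : Type} (I : nat -> T -> Prop) (R : nat -> T -> T -> Prop) :
  (exists x0, I 0 x0) -> (forall n x, I n x -> exists y, I (S n) y /\ R n x y) ->
  exists f : nat -> T, forall n, I n (f n) /\ R n (f n) (f (S n)).
Proof.
  intros [x0 Hx0] Hstep.
  assert (Hstep' : forall n x, exists y, I n x -> I (S n) y /\ R n x y).
  { intros n x. destruct (classic (I n x)) as [Hx | Hx].
    - destruct (Hstep n x Hx) as [y Hy]. exists y; auto.
    - exists x; contradiction. }
  set (next n x := proj1_sig (constructive_indefinite_description _ (Hstep' n x))).
  assert (Hnext : forall n x, I n x -> I (S n) (next n x) /\ R n x (next n x)).
  { intros n x. exact (proj2_sig (constructive_indefinite_description _ (Hstep' n x))). }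
  set (f := nat_rect (fun _ => T) x0 next).
  assert (Hf : forall n, I n (f n)) by (induction n; [exact Hx0 | apply Hnext, IHn]).
  exists f. intro n. split; [apply Hf | apply (Hnext n), Hf].
Qed.

Section Compactness.
Variables (Q : rset) (U : nat -> aset) (F : formula).
Hypotheses
  (U_splits : forall n, splits Q (U n))
  (U_mono : forall n m, n <= m -> subset (U n) (U m))
  (U_cover : forall r, Q r -> exists n, bot Q (U n) r)
  (U_finite : forall n, exists L, forall A, U n A -> In A L)
  (F_in_U0 : forall A, In A (fatoms F) -> U 0 A)
  (bots_refute : forall n, exists Y, stable_model (bot Q (U n)) Y /\ ~ holds Y F).

Definition countermodel_trace (n j : nat) (X : aset) : Prop :=
  n <= j /\ exists Y, stable_model (bot Q (U j)) Y /\ ~ holds Y F /\ inter Y (U n) = X.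

Definition persistent_trace (n : nat) (X : aset) : Prop :=
  forall j, exists j', j <= j' /\ countermodel_trace n j' X.

Lemma persistent_trace_countermodel n X :
  persistent_trace n X -> stable_model (bot Q (U n)) X /\ ~ holds X F.
Proof.
  intros HX. destruct (HX 0) as [j [_ [Hnj [Y [HY [HYF <-]]]]]]. split.
  - rewrite <- (bot_bot Q (U n) (U j)) by (apply U_mono; exact Hnj).
    apply stable_restrict; [apply splits_bot, U_splits | exact HY].
  - intro HF. apply HYF. revert HF; apply holds_agree.
    intros A HA. assert (U n A) by (apply (U_mono 0); [lia | auto]).
    unfold inter; tauto.
Qed.

Lemma persistent_trace_base : exists X, persistent_trace 0 X.
Proof.
  destruct (U_finite 0) as [L HL].
  destruct (infinitely_often_subset L (countermodel_trace 0)) as [X [_ HX]].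
  - intro j. exists j; split; auto. destruct (bots_refute j) as [Y [HY HYF]].
    exists (inter Y (U 0)). split; [intros A [_ HA]; apply HL, HA |].
    split; [lia |]. exists Y; auto.
  - exists X; exact HX.
Qed.

Lemma persistent_trace_extend n X :
  persistent_trace n X -> exists X', persistent_trace (S n) X' /\ inter X' (U n) = X.
Proof.
  intros HX. destruct (U_finite (S n)) as [L HL].
  destruct (infinitely_often_subset L (fun j X' =>
      countermodel_trace (S n) j X' /\ inter X' (U n) = X)) as [X' [_ HX']].
  - intro j. destruct (HX (Nat.max j (S n))) as [j' [Hj [_ [Y [HY [HYF HYX]]]]]].
    exists j'; split; [lia |]. exists (inter Y (U (S n))).
    split; [intros A [_ HA]; apply HL, HA |]. split.
    + split; [lia |]. exists Y; auto.
    + rewrite <- HYX. apply aset_ext; intro A; unfold inter; split; [tauto |].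
      intros [HYA HUA]; repeat split; auto. apply (U_mono n); auto.
  - exists X'. split.
    + intro j. destruct (HX' j) as [j' [Hj [Htrace _]]]. exists j'; auto.
    + destruct (HX' 0) as [_ [_ [_ HX'X]]]. exact HX'X.
Qed.

Lemma stable_countermodel : exists M, stable_model Q M /\ ~ holds M F.
Proof.
  destruct (dependent_choice persistent_trace (fun n X X' => inter X' (U n) = X)
              persistent_trace_base persistent_trace_extend) as [Ms HMs].
  assert (Ms_stable : forall n, stable_model (bot Q (U n)) (Ms n))
    by (intro n; apply persistent_trace_countermodel, HMs).
  assert (Ms_compat : forall n, inter (Ms (S n)) (U n) = Ms n) by (intro n; apply HMs).
  exists (Mlim Ms). split; [exact (Mlim_stable Q U Ms U_splits U_mono U_cover Ms_stable Ms_compat) |].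
  intro HF. apply (persistent_trace_countermodel 0 (Ms 0) (proj1 (HMs 0))).
  revert HF; apply holds_agree. intros A HA. symmetry.
  apply (Mlim_restrict Q U Ms U_splits U_mono Ms_stable Ms_compat), F_in_U0, HA.
Qed.

End Compactness.

Definition depset (P : program) (p : nat -> atom) (k : nat) : aset :=
  fun A => exists i, 1 <= i <= k /\ depends P (p i) A.

Lemma depset_splits P p k : splits (Ground P) (depset P p k).
Proof.
  intros r A B Hr HA [i [Hi Hdep]] HB. exists i; split; auto.
  eapply rt_trans; [exact Hdep | apply rt_step; exists r; auto].
Qed.

Lemma module_bot P p k : module P p k = bot (Ground P) (depset P p k).
Proof.
  apply rset_ext; intro r; unfold module, bot, depset; split.
  - intros [Hr [i [Hi [A [HA Hdep]]]]]. split; auto. exists A; split; eauto.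
  - intros [Hr [A [HA [i [Hi Hdep]]]]]. split; auto. exists i; split; eauto.
Qed.

Lemma depset_mono P p n m : n <= m -> subset (depset P p n) (depset P p m).
Proof. intros Hnm A [i [Hi Hdep]]. exists i; split; [lia | auto]. Qed.

Lemma depset_finite P p : finitely_recursive P ->
  forall k, exists L, forall A, depset P p k A -> In A L.
Proof.
  intros Hfin. induction k as [|k [L IH]].
  - exists []. intros A [i [Hi _]]. lia.
  - destruct (Hfin (p (S k))) as [l Hl]. exists (L ++ l). intros A [i [Hi Hdep]].
    apply in_or_app. destruct (Nat.eq_dec i (S k)) as [-> | Hne].
    + right; auto.
    + left; apply IH. exists i; split; [lia | auto].
Qed.

Lemma module_mono P p n m r : n <= m -> module P p n r -> module P p m r.
Proof. intros Hnm [Hr [i [Hi HAi]]]. split; auto. exists i; split; [lia | auto]. Qed.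

Lemma atoms_of_module_mono P p n m A :
  n <= m -> atoms_of (module P p n) A -> atoms_of (module P p m) A.
Proof. intros Hnm [r [Hr HA]]. exists r; split; auto. apply (module_mono P p n); auto. Qed.

(* Every ground rule has a head atom (P is disjunctive), which is some p_i. *)
Lemma module_cover P p : disjunctive_program P -> enumerates (ground_heads P) p ->
  forall r, Ground P r -> exists n, 1 <= n /\ module P p n r.
Proof.
  intros Hdisj [_ Henum] r Hr.
  assert (Hhead : exists A, In A (head r)).
  { destruct Hr as [r0 [s [Hin [_ ->]]]]. simpl.
    pose proof (Hdisj r0 Hin) as Hne. destruct (head r0) as [|A t]; [congruence |].
    exists (subst_atom s A); simpl; auto. }
  destruct Hhead as [A HA].
  destruct (Henum A) as [i [Hi Hpi]]; [exists r; auto |].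
  exists i; split; auto. split; auto. exists i; split; [lia |].
  exists A; split; auto. rewrite Hpi. apply rt_refl.
Qed.

Lemma atoms_in_some_module P p (l : list atom) :
  disjunctive_program P -> enumerates (ground_heads P) p ->
  (forall A, In A l -> atoms_of (Ground P) A) ->
  exists K, 1 <= K /\ forall A, In A l -> atoms_of (module P p K) A.
Proof.
  intros Hdisj Henum. induction l as [|a l IH]; intro Hl.
  - exists 1; split; auto. intros _ [].
  - destruct IH as [K [HK HKl]]; [intros; apply Hl; simpl; auto |].
    destruct (Hl a (or_introl eq_refl)) as [r [Hr Har]].
    destruct (module_cover P p Hdisj Henum r Hr) as [n [Hn Hrn]].
    exists (Nat.max K n). split; [lia |]. intros A [<- | HA].
    + apply (atoms_of_module_mono P p n); [lia | exists r; auto].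
    + apply (atoms_of_module_mono P p K); [lia | auto].
Qed.

Theorem theorem5p2 (P : program) (p : nat -> atom) (F : formula) :
  disjunctive_program P ->
  finitely_recursive P ->
  enumerates (ground_heads P) p ->
  (forall A, In A (fatoms F) -> atoms_of (Ground P) A) ->
  (skeptical (Ground P) F <->
   exists k, 1 <= k /\ skeptical (module P p k) F /\
             (forall A, In A (fatoms F) -> atoms_of (module P p k) A)).
Proof.
  intros Hdisj Hfin Henum HFground. split.
  2:{ intros [k [_ [Hsk HFk]]]. rewrite module_bot in Hsk, HFk.
      exact (skeptical_of_bot _ _ (depset_splits P p k) F Hsk HFk). }
  intro Hsk. apply NNPP; intro Hno.
  destruct (atoms_in_some_module P p (fatoms F) Hdisj Henum HFground) as [K [HK HFK]].
  destruct (stable_countermodel (Ground P) (fun n => depset P p (K + n)) F) as [M [HM HMF]].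
  - intro n; apply depset_splits.
  - intros n m Hnm; apply depset_mono; lia.
  - intros r Hr. destruct (module_cover P p Hdisj Henum r Hr) as [n [_ Hrn]].
    exists n. rewrite <- module_bot. apply (module_mono P p n); [lia | exact Hrn].
  - intro n; apply depset_finite, Hfin.
  - intros A HA. rewrite Nat.add_0_r. apply (atoms_of_bot (Ground P)); [apply depset_splits |].
    rewrite <- module_bot; auto.
  - intro n. rewrite <- module_bot. apply NNPP; intro Hnone.
    apply Hno. exists (K + n). repeat split; [lia | |].
    + intros M HM. apply NNPP; intro HMF. apply Hnone; exists M; auto.
    + intros A HA. apply (atoms_of_module_mono P p K); [lia | auto].
  - exact (HMF (Hsk M HM)).
Qed.
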